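(* Let $\varphi\colon (A,m,K)\to (B,n,L)$ be a local homomorphism of noetherian local rings and $I$ a proper ideal of $A$. Then $0\leq \delta_A(I)-\delta^\varphi_B(I)\leq \operatorname{rd}(\varphi)$.
   Context: All rings are commutative and noetherian with identity. A local homomorphism satisfies $\varphi(m)\subseteq n$; $K=A/m$, $L=B/n$. $\delta_A(I)=\dim_K\big((I+m^2)/m^2\big)$ and $\delta^\varphi_B(I)=\dim_L\big((IB+n^2)/n^2\big)$. The regularity defect $\operatorname{rd}(\varphi)$ is the $L$-dimension of the kernel of the natural $L$-linear map $m/m^2\otimes_K L\to n/n^2$, $\bar x\otimes\bar b\mapsto \overline{\varphi(x)b}$. *)

(* Ideals are represented as Prop-valued predicates on a
   commutative ring; quotient vector spaces over residue fields are handled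
   by unfolding K-linear (in)dependence of classes modulo an ideal. *)
From HB Require Import structures.
From mathcomp Require Import all_boot all_order all_algebra.
Set Implicit Arguments. Unset Strict Implicit. Unset Printing Implicit Defensive.
Import GRing.Theory.
Local Open Scope ring_scope.

Section Ideals.
Variable R : comNzRingType.

Definition is_ideal (I : R -> Prop) : Prop :=
  I 0 /\ (forall x y, I x -> I y -> I (x + y)) /\ (forall a x, I x -> I (a * x)).

Definition proper_ideal_p (I : R -> Prop) : Prop := is_ideal I /\ ~ I 1.

Definition maximal_ideal_p (M : R -> Prop) : Prop :=
  proper_ideal_p M /\
  forall J, is_ideal J -> (forall x, M x -> J x) ->
    (forall x, J x <-> M x) \/ J 1.

Definition local_ring (M : R -> Prop) : Prop :=
  maximal_ideal_p M /\ forall M', maximal_ideal_p M' -> forall x, M' x <-> M x.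

Definition noetherian : Prop :=
  forall J, is_ideal J -> exists n (g : 'I_n -> R),
    forall x, J x <-> exists c : 'I_n -> R, x = \sum_(i < n) c i * g i.

Definition sum_ideal (I J : R -> Prop) : R -> Prop :=
  fun x => exists a b, I a /\ J b /\ x = a + b.

Definition prod_ideal (I J : R -> Prop) : R -> Prop :=
  fun x => exists n (a b : 'I_n -> R),
    (forall i, I (a i) /\ J (b i)) /\ x = \sum_(i < n) a i * b i.

(* The classes mod N of the family x are linearly independent over the
   residue field R/M (the scalar action of the class of c on the class of
   x is the class of c * x). *)
Definition indep_mod (M N : R -> Prop) k (x : 'I_k -> R) : Prop :=
  forall c : 'I_k -> R, N (\sum_(j < k) c j * x j) -> forall j, M (c j).

(* The (R/M)-vector space S/N (N ⊆ S ideals, M N ⊆ N) has dimension d. *)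
Definition has_dim (M N S : R -> Prop) (d : nat) : Prop :=
  (exists x : 'I_d -> R, (forall j, S (x j)) /\ indep_mod M N x) /\
  (forall x : 'I_d.+1 -> R, (forall j, S (x j)) -> ~ indep_mod M N x).

End Ideals.

Definition ext_ideal (A B : comNzRingType) (phi : {rmorphism A -> B})
  (I : A -> Prop) : B -> Prop :=
  fun y => exists n (a : 'I_n -> A) (b : 'I_n -> B),
    (forall i, I (a i)) /\ y = \sum_(i < n) phi (a i) * b i.

Definition delta_is (A : comNzRingType) (mA I : A -> Prop) (d : nat) : Prop :=
  has_dim mA (prod_ideal mA mA) (sum_ideal I (prod_ideal mA mA)) d.

Definition delta_phi_is (A B : comNzRingType) (phi : {rmorphism A -> B})
  (mB : B -> Prop) (I : A -> Prop) (d : nat) : Prop :=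
  has_dim mB (prod_ideal mB mB) (sum_ideal (ext_ideal phi I) (prod_ideal mB mB)) d.

Definition cotangent_basis (A : comNzRingType) (mA : A -> Prop) e
  (x : 'I_e -> A) : Prop :=
  (forall i, mA (x i)) /\ indep_mod mA (prod_ideal mA mA) x /\
  (forall y, mA y -> exists c : 'I_e -> A,
      prod_ideal mA mA (y - \sum_(i < e) c i * x i)).

(* Via the basis x of m/m^2, m/m^2 ⊗_K L is identified with L^e, an element
   (ℓ_i) (represented by lifts v i ∈ B) corresponding to Σ x̄_i ⊗ ℓ_i, which
   the natural map sends to the class of Σ φ(x_i) v_i in n/n^2. *)
Definition in_rd_kernel (A B : comNzRingType) (phi : {rmorphism A -> B})
  (mB : B -> Prop) e (x : 'I_e -> A) (v : 'I_e -> B) : Prop :=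
  prod_ideal mB mB (\sum_(i < e) phi (x i) * v i).

Definition vec_indep (B : comNzRingType) (mB : B -> Prop) e k
  (V : 'I_k -> 'I_e -> B) : Prop :=
  forall c : 'I_k -> B,
    (forall i, mB (\sum_(j < k) c j * V j i)) -> forall j, mB (c j).

(* rd(phi) = dim_L of the kernel of m/m^2 ⊗_K L -> n/n^2 *)
Definition rd_is (A B : comNzRingType) (phi : {rmorphism A -> B})
  (mA : A -> Prop) (mB : B -> Prop) (r : nat) : Prop :=
  exists e (x : 'I_e -> A), cotangent_basis mA x /\
    (exists V : 'I_r -> 'I_e -> B,
        (forall j, in_rd_kernel phi mB x (V j)) /\ vec_indep mB V) /\
    (forall V : 'I_r.+1 -> 'I_e -> B,
        (forall j, in_rd_kernel phi mB x (V j)) -> ~ vec_indep mB V).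

(* Choose y_1, ..., y_d in I + m^2 whose classes form a K-basis of (I + m^2)/m^2, extend
   them to x_1, ..., x_e whose classes form a K-basis of m/m^2. The classes of phi(y_j) span
   (IB + n^2)/n^2, so delta^phi_B(I) <= d. Rank-nullity for the L-linear map
   L^d -> n/n^2, e_j |-> class of phi(y_j), gives d = s + t with s <= delta^phi_B(I)
   and t the dimension of its kernel; padding kernel vectors with zeros embeds that
   kernel into the kernel of m/m^2 (x) L = L^e -> n/n^2, hence t <= rd(phi). *)

From HB Require Import structures.
From mathcomp Require Import all_boot all_order all_algebra.
From Stdlib Require Import ClassicalEpsilon Classical.
From mathcomp Require Import zify.
Set Implicit Arguments. Unset Strict Implicit. Unset Printing Implicit Defensive.
Import GRing.Theory.
Local Open Scope ring_scope.

Definition rcons_fam (X : Type) n (u : 'I_n -> X) (x : X) : 'I_n.+1 -> X :=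
  fun i => if unlift ord_max i is Some j then u j else x.

Lemma rcons_fam_max X n (u : 'I_n -> X) x : rcons_fam u x ord_max = x.
Proof. by rewrite /rcons_fam unlift_none. Qed.

Lemma lift_max_widen n (j : 'I_n) : lift ord_max j = widen_ord (leqnSn n) j.
Proof. by apply: val_inj; rewrite /= /bump leqNgt ltn_ord. Qed.

Lemma rcons_fam_widen X n (u : 'I_n -> X) x j :
  rcons_fam u x (widen_ord (leqnSn n) j) = u j.
Proof. by rewrite -lift_max_widen /rcons_fam liftK. Qed.

Lemma rcons_fam_comp (X Y : Type) n (w : X -> Y) (f : 'I_n -> X) x :
  w \o rcons_fam f x =1 rcons_fam (w \o f) (w x).
Proof. by move=> i; rewrite /rcons_fam /=; case: unlift. Qed.

Lemma widen_ordP n (P : 'I_n.+1 -> Prop) :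
  P ord_max -> (forall j, P (widen_ord (leqnSn n) j)) -> forall i, P i.
Proof. by move=> Pmax Pw i; case: (unliftP ord_max i) => [j ->|->]; rewrite ?lift_max_widen. Qed.

Definition is_submod (R : comNzRingType) (V : lmodType R) (N : V -> Prop) : Prop :=
  N 0 /\ (forall x y, N x -> N y -> N (x + y)) /\ (forall (a : R) x, N x -> N (a *: x)).

Section Submodules.
Variables (R : comNzRingType) (V : lmodType R) (N : V -> Prop).
Hypothesis N_submod : is_submod N.

Lemma submod0 : N 0. Proof. by case: N_submod. Qed.

Lemma submodD x y : N x -> N y -> N (x + y). Proof. by case: N_submod => _ [? ?]; auto. Qed.

Lemma submodZ (a : R) x : N x -> N (a *: x). Proof. by case: N_submod => _ [? ?]; auto. Qed.

Lemma submodN x : N x -> N (- x).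
Proof. by rewrite -scaleN1r; apply: submodZ. Qed.

Lemma submodB x y : N x -> N y -> N (x - y).
Proof. by move=> Nx /submodN; apply: submodD. Qed.

Lemma submodDl_cancel x y : N (x + y) -> N y -> N x.
Proof. by move=> Nxy Ny; have := submodB Nxy Ny; rewrite addrK. Qed.

Lemma submod_sum k (F : 'I_k -> V) : (forall i, N (F i)) -> N (\sum_(i < k) F i).
Proof. by move=> NF; elim/big_ind: _ => //; [apply: submod0 | apply: submodD]. Qed.

End Submodules.

Section Ideals.
Variable R : comNzRingType.
Implicit Types (I J M : R -> Prop) (x y a b : R).

Lemma ideal_submod J : is_ideal J -> is_submod (J : R^o -> Prop).
Proof. by []. Qed.

Lemma idealD J x y : is_ideal J -> J x -> J y -> J (x + y).
Proof. by move=> /ideal_submod sJ; apply: (@submodD _ R^o J sJ x y). Qed.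

Lemma idealDl_cancel J x y : is_ideal J -> J (x + y) -> J y -> J x.
Proof. by move=> /ideal_submod sJ; apply: (@submodDl_cancel _ R^o J sJ x y). Qed.

Lemma idealM J a x : is_ideal J -> J x -> J (a * x).
Proof. by move=> /ideal_submod sJ; apply: (@submodZ _ R^o J sJ a x). Qed.

Lemma idealN J x : is_ideal J -> J x -> J (- x).
Proof. by move=> /ideal_submod sJ; apply: (@submodN _ R^o J sJ x). Qed.

Lemma ideal_sum J k (F : 'I_k -> R) : is_ideal J -> (forall i, J (F i)) -> J (\sum_(i < k) F i).
Proof. by move=> /ideal_submod sJ; apply: (@submod_sum _ R^o J sJ k F). Qed.

Lemma generators_mem J n (g : 'I_n -> R) :
  (forall x, J x <-> exists c : 'I_n -> R, x = \sum_(i < n) c i * g i) ->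
  forall i, J (g i).
Proof.
move=> genJ i; apply/genJ; exists (fun j => (j == i)%:R).
rewrite (bigD1 i) //= eqxx mul1r big1 ?addr0 // => j /negbTE ->; by rewrite mul0r.
Qed.

Lemma maximal_residue_inv M a : maximal_ideal_p M -> ~ M a -> exists b, M (b * a - 1).
Proof.
move=> [[iM _] maxM] nMa.
pose J x := exists m r, M m /\ x = m + r * a.
have iJ : is_ideal J.
  split; first by exists 0, 0; split; [case: iM | rewrite mul0r addr0].
  split=> [x y [m1 [r1 [M1 ->]]] [m2 [r2 [M2 ->]]] | c x [m1 [r1 [M1 ->]]]].
    exists (m1 + m2), (r1 + r2); split; first exact: idealD.
    by rewrite mulrDl addrACA.
  exists (c * m1), (c * r1); split; first exact: idealM.
  by rewrite mulrDr mulrA.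
have [x Mx|MJ|[m [r [Mm E]]]] := maxM J iJ.
- by exists x, 0; rewrite mul0r addr0.
- case: nMa; apply/MJ; exists 0, 1.
  by split; [case: iM | rewrite add0r mul1r].
- exists r; have -> : r * a - 1 = - m by rewrite E opprD addrCA subrr addr0.
  exact: idealN.
Qed.

Lemma prod_ideal_is_ideal I J : is_ideal I -> is_ideal (prod_ideal I J).
Proof.
move=> iI; split; first by exists 0%N, (fun _ => 0), (fun _ => 0); split; [case | rewrite big_ord0].
split=> [x y [n1 [a1 [b1 [IJ1 ->]]]] [n2 [a2 [b2 [IJ2 ->]]]] | c x [n [a [b [IJ ->]]]]].
  pose cat (u1 : 'I_n1 -> R) (u2 : 'I_n2 -> R) i :=
    match split i with inl j => u1 j | inr j => u2 j end.
  exists (n1 + n2)%N, (cat a1 a2), (cat b1 b2); split; first by move=> i; rewrite /cat; case: split.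
  by rewrite big_split_ord /cat; congr (_ + _); apply: eq_bigr => i _;
    rewrite ?(unsplitK (inl i)) ?(unsplitK (inr i)).
exists n, (fun i => c * a i), b; split.
  by move=> i; have [Ia Jb] := IJ i; split => //; apply: idealM.
by rewrite mulr_sumr; apply: eq_bigr => i _; rewrite mulrA.
Qed.

Lemma prod_ideal_subr I J x : is_ideal J -> prod_ideal I J x -> J x.
Proof.
move=> iJ [n [a [b [IJ ->]]]]; apply: ideal_sum => // i.
by apply: idealM => //; case: (IJ i).
Qed.

Lemma prod_ideal_mul I J a b : I a -> J b -> prod_ideal I J (a * b).
Proof. by move=> Ia Jb; exists 1%N, (fun _ => a), (fun _ => b); rewrite big_ord1. Qed.

Lemma noetherian_chain_stationary (C : nat -> R -> Prop) : noetherian R ->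
  (forall n, is_ideal (C n)) -> (forall n x, C n x -> C n.+1 x) ->
  exists K, forall n x, C n x -> C K x.
Proof.
move=> noeth iC incC.
have mono i j x : (i <= j)%N -> C i x -> C j x.
  by move/subnK <-; elim: (j - i)%N => // d IH /IH /incC.
pose U x := exists n, C n x.
have iU : is_ideal U.
  split; first by exists 0%N; case: (iC 0%N).
  split=> [x y [i Cx] [j Cy] | c x [i Cx]]; last by exists i; apply: idealM.
  exists (maxn i j); apply: idealD; first exact: iC.
    exact: mono (leq_maxl i j) Cx.
  exact: mono (leq_maxr i j) Cy.
have [m [g genU]] := noeth U iU.
have [idx Cg] := fin_all_exists (generators_mem genU).
exists (\max_i idx i)%N => n x Cx.
have /genU [c ->] : U x by exists n.
apply: ideal_sum; first exact: iC.
move=> i; apply: idealM; first exact: iC.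
exact: mono (leq_bigmax i) (Cg i).
Qed.

Lemma proper_ideal_sub_maximal J : noetherian R -> proper_ideal_p J ->
  exists M, maximal_ideal_p M /\ forall x, J x -> M x.
Proof.
move=> noeth PJ; apply: NNPP => noM.
pose P K := proper_ideal_p K /\ forall x, J x -> K x.
pose larger K K' := P K' /\ (forall x, K x -> K' x) /\ exists y, K' y /\ ~ K y.
have grow K : P K -> exists K', larger K K'.
  move=> [PK JK]; apply: NNPP => noK'; apply: noM; exists K; split=> //; split=> //.
  move=> K' iK' KK'; have [K'1|nK'1] := classic (K' 1); first by right.
  left=> x; split=> [K'x|]; last exact: KK'.
  apply: NNPP => nKx; apply: noK'; exists K'; split; last by split=> //; exists x.
  by split=> // y /JK /KK'.
pose C n := iter n (fun K => epsilon (inhabits K) (larger K)) J.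
have CP n : P (C n) /\ larger (C n) (C n.+1).
  elim: n => [|n [_ [PCn _]]]; [have PC : P (C 0%N) by split | have PC := PCn];
    by split=> //; apply: epsilon_spec; apply: grow.
have [K stat] : exists K, forall n x, C n x -> C K x.
  apply: noetherian_chain_stationary => // [n | n x]; first by case: (CP n) => [[[]]].
  by case: (CP n) => _ [_ []] => sub _; apply: sub.
by have [_ [_ [_ [y [CKy nCKy]]]]] := CP K; apply/nCKy/(stat K.+1).
Qed.

Lemma vec_indep_rcons0 M e t (Rl : 'I_t -> 'I_e -> R) :
  vec_indep M Rl -> vec_indep M (fun l => rcons_fam (Rl l) 0).
Proof.
move=> indep_Rl c Mc; apply: indep_Rl => i.
by have := Mc (widen_ord (leqnSn e) i); under eq_bigr do rewrite rcons_fam_widen.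
Qed.

Lemma vec_indep_rcons M e t (Rl : 'I_t -> 'I_e -> R) rho : is_ideal M ->
  rho ord_max = 1 -> vec_indep M Rl ->
  vec_indep M (rcons_fam (fun l => rcons_fam (Rl l) 0) rho).
Proof.
move=> iM rho1 indep_Rl c Mc.
have Mct : M (c ord_max).
  have := Mc ord_max; rewrite big_ord_recr /= !rcons_fam_max rho1 mulr1.
  by under eq_bigr do rewrite rcons_fam_widen rcons_fam_max mulr0; rewrite big1_eq add0r.
elim/widen_ordP => //; apply: indep_Rl => i.
have := Mc (widen_ord (leqnSn e) i); rewrite big_ord_recr /= rcons_fam_max.
under eq_bigr do rewrite !rcons_fam_widen.
by move/idealDl_cancel; apply=> //; rewrite mulrC; apply: idealM.
Qed.

End Ideals.

Lemma exists_max_nat (P : nat -> Prop) n :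
  P 0%N -> (forall k, P k -> (k <= n)%N) -> exists d, P d /\ ~ P d.+1.
Proof.
move=> P0 bounded; apply: NNPP => noMax.
have Pall d : P d by elim: d => // d IH; apply: NNPP => nPd; apply: noMax; exists d.
by have := bounded _ (Pall n.+1); rewrite ltnn.
Qed.

Section ResidueLinearAlgebra.
Variables (R : comNzRingType) (V : lmodType R) (M : R -> Prop) (N : V -> Prop).
Hypothesis N_submod : is_submod N.

(* The R/M-vector space S/N is handled through representatives in V: a family is free
   when every relation holding modulo N has all its coefficients in M, and [killed v]
   (M v included in N) says that the class of v is a vector of that space. *)
Definition free_mod k (u : 'I_k -> V) : Prop :=
  forall c : 'I_k -> R, N (\sum_(j < k) c j *: u j) -> forall j, M (c j).

Definition span_mod k (u : 'I_k -> V) (v : V) : Prop :=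
  exists a : 'I_k -> R, N (v - \sum_(j < k) a j *: u j).

Definition killed (v : V) : Prop := forall c, M c -> N (c *: v).

Definition dim_mod (S : V -> Prop) (d : nat) : Prop :=
  (exists w : 'I_d -> V, (forall j, S (w j)) /\ free_mod w) /\
  (forall w : 'I_d.+1 -> V, (forall j, S (w j)) -> ~ free_mod w).

Lemma free_mod_widen k (u : 'I_k.+1 -> V) :
  free_mod u -> free_mod (fun j => u (widen_ord (leqnSn k) j)).
Proof.
move=> free_u c Nc j; have := free_u (rcons_fam c 0) _ (widen_ord (leqnSn k) j).
rewrite rcons_fam_widen; apply; rewrite big_ord_recr /= rcons_fam_max scale0r addr0.
by under eq_bigr => i _ do rewrite rcons_fam_widen.
Qed.

Lemma free_mod_eq k (u u' : 'I_k -> V) : u =1 u' -> free_mod u -> free_mod u'.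
Proof. by move=> eq_u free_u c; under eq_bigr do rewrite -eq_u; apply: free_u. Qed.

Lemma dim_mod_le S d k (w : 'I_k -> V) :
  dim_mod S d -> (forall j, S (w j)) -> free_mod w -> (k <= d)%N.
Proof.
move=> [_ maxd]; elim: k w => // k IH w Sw free_w.
have := IH _ (fun j => Sw _) (free_mod_widen free_w).
by rewrite leq_eqVlt => /orP [/eqP ekd|//]; subst d; case: (maxd w).
Qed.

Lemma span_modD k (u : 'I_k -> V) v1 v2 :
  span_mod u v1 -> span_mod u v2 -> span_mod u (v1 + v2).
Proof.
move=> [a Na] [b Nb]; exists (fun j => a j + b j).
suff -> : v1 + v2 - \sum_(j < k) (a j + b j) *: u j =
    (v1 - \sum_(j < k) a j *: u j) + (v2 - \sum_(j < k) b j *: u j) by apply: submodD.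
under eq_bigr => j _ do rewrite scalerDl.
by rewrite big_split /= opprD addrACA.
Qed.

Lemma span_modZ k (u : 'I_k -> V) (c : R) v : span_mod u v -> span_mod u (c *: v).
Proof.
move=> [a Na]; exists (fun j => c * a j).
suff -> : c *: v - \sum_(j < k) (c * a j) *: u j = c *: (v - \sum_(j < k) a j *: u j).
  exact: submodZ.
by rewrite scalerBr scaler_sumr; under eq_bigr => j _ do rewrite -scalerA.
Qed.

Lemma span_mod_submod k (u : 'I_k -> V) v : N v -> span_mod u v.
Proof. by move=> Nv; exists (fun _ => 0); rewrite big1 ?subr0 // => j _; rewrite scale0r. Qed.

Lemma span_mod_sum k (u : 'I_k -> V) n (F : 'I_n -> V) :
  (forall i, span_mod u (F i)) -> span_mod u (\sum_(i < n) F i).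
Proof.
move=> spanF; elim/big_ind: _ => //; last exact: span_modD.
exact/span_mod_submod/(submod0 N_submod).
Qed.

Lemma free_mod_lift_sub k (w : 'I_k.+1 -> V) j0 (al : 'I_k -> R) :
  free_mod w -> free_mod (fun j => w (lift j0 j) - al j *: w j0).
Proof.
move=> free_w c Nc j.
pose c' i := if unlift j0 i is Some j then c j else - \sum_(j < k) c j * al j.
suff /free_w/(_ (lift j0 j)) : N (\sum_(i < k.+1) c' i *: w i) by rewrite /c' liftK.
suff -> : \sum_(i < k.+1) c' i *: w i = \sum_(j < k) c j *: (w (lift j0 j) - al j *: w j0).
  exact: Nc.
rewrite (bigD1_ord j0) //= /c' unlift_none.
under eq_bigr => i _ do rewrite liftK.
under [RHS]eq_bigr => i _ do rewrite scalerBr scalerA.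
by rewrite sumrB addrC scaleNr scaler_suml.
Qed.

Hypothesis M_max : maximal_ideal_p M.

Let M_ideal : is_ideal M := M_max.1.1.

Lemma span_mod_of_not_free_rcons k (u : 'I_k -> V) s :
  free_mod u -> killed s -> ~ free_mod (rcons_fam u s) -> span_mod u s.
Proof.
move=> free_u killed_s not_free.
have [c [Nc [j nMcj]]] : exists c, N (\sum_(i < k.+1) c i *: rcons_fam u s i) /\
    exists j, ~ M (c j).
  apply: NNPP => H; apply: not_free => c Nc j; apply: NNPP => nM; apply: H.
  by exists c; split => //; exists j.
move: Nc; rewrite big_ord_recr /= rcons_fam_max.
under eq_bigr => i _ do rewrite rcons_fam_widen.
set X := \sum_(i < k) _ => NXs.
have nMmax : ~ M (c ord_max).
  move=> Mmax; apply: nMcj; elim/widen_ordP: j => // j.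
  exact: free_u (submodDl_cancel N_submod NXs (killed_s _ Mmax)) j.
have [b Mb] := maximal_residue_inv M_max nMmax.
exists (fun i => - (b * c (widen_ord (leqnSn k) i))).
suff -> : s - \sum_(i < k) - (b * c (widen_ord (leqnSn k) i)) *: u i
    = b *: (X + c ord_max *: s) - (b * c ord_max - 1) *: s.
  by apply: submodB => //; [apply: submodZ | apply: killed_s].
under eq_bigr => i _ do rewrite scaleNr -scalerA.
rewrite sumrN opprK -scaler_sumr scalerDr scalerBl scalerA scale1r.
by rewrite opprB -addrA subrKC addrC.
Qed.

Lemma free_mod_rcons k (u : 'I_k -> V) s :
  free_mod u -> killed s -> ~ span_mod u s -> free_mod (rcons_fam u s).
Proof.
move=> free_u killed_s not_span; apply: NNPP => not_free; apply: not_span.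
exact: span_mod_of_not_free_rcons.
Qed.

Lemma free_mod_le_span n (u : 'I_n -> V) k (w : 'I_k -> V) :
  (forall i, killed (u i)) -> (forall j, span_mod u (w j)) -> free_mod w -> (k <= n)%N.
Proof.
elim: n u k w => [|n IH] u [|k] w killed_u span_w free_w //.
  have N_w j : N (w j) by have [a] := span_w j; rewrite big_ord0 subr0.
  have [[_ nM1] _] := M_max; case: nM1; apply: (free_w (fun _ => 1) _ ord0).
  by under eq_bigr do rewrite scale1r; apply: submod_sum.
have [a Ea] := fin_all_exists span_w.
pose u' i := u (widen_ord (leqnSn n) i).
have span_w' j : span_mod u' (w j - a j ord_max *: u ord_max).
  exists (fun i => a j (widen_ord (leqnSn n) i)).
  by move: (Ea j); rewrite big_ord_recr /= opprD addrA addrAC.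
have [M_all|/not_all_ex_not [j0 nMj0]] := classic (forall j, M (a j ord_max)).
  apply/leqW/(IH u' _ w _ _ free_w) => [i|j]; first exact: killed_u.
  rewrite -(subrK (a j ord_max *: u ord_max) (w j)).
  exact/span_modD/span_mod_submod/killed_u.
(* w j0 has a unit coefficient on u ord_max: use it to eliminate u ord_max. *)
have [b Mb] := maximal_residue_inv M_max nMj0.
pose al j := a (lift j0 j) ord_max * b.
rewrite ltnS; apply: (IH u' _ (fun j => w (lift j0 j) - al j *: w j0)) => [i|j|].
- exact: killed_u.
- set c := a (lift j0 j) ord_max.
  have -> : w (lift j0 j) - al j *: w j0 = (w (lift j0 j) - c *: u ord_max)
      - al j *: (w j0 - a j0 ord_max *: u ord_max) - (c * (b * a j0 ord_max - 1)) *: u ord_max.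
    rewrite /al scalerBr !scalerA mulrBr mulr1 scalerBl !mulrA.
    by rewrite !opprB addrAC addrA subrKA subrK.
  apply: span_modD; last first.
    by apply/span_mod_submod/(submodN N_submod)/killed_u; apply: idealM M_ideal Mb.
  by apply: span_modD => //; rewrite -scaleNr; apply: span_modZ.
- exact: free_mod_lift_sub.
Qed.

Lemma dim_mod_exists S n :
  (forall k (w : 'I_k -> V), (forall j, S (w j)) -> free_mod w -> (k <= n)%N) ->
  exists d, dim_mod S d.
Proof.
move=> bounded; pose P d := exists w : 'I_d -> V, (forall j, S (w j)) /\ free_mod w.
have P0 : P 0%N by exists (fun _ => 0); split=> [[]|c _ []].
have [d [Pd nPd]] : exists d, P d /\ ~ P d.+1.
  by apply: (exists_max_nat P0) => k [w [Sw free_w]]; apply: bounded Sw free_w.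
by exists d; split=> // w Sw free_w; apply: nPd; exists w.
Qed.

Lemma free_mod_extend (S : V -> Prop) n (g : 'I_n -> V) :
  (forall v, S v -> killed v) -> (forall i, killed (g i)) ->
  (forall v, S v -> span_mod g v) ->
  forall a (y : 'I_a -> V), (forall j, S (y j)) -> free_mod y ->
  exists e (le_ae : (a <= e)%N) (x : 'I_e -> V),
    [/\ forall j, S (x j), free_mod x, forall j, x (widen_ord le_ae j) = y j
      & forall v, S v -> span_mod x v].
Proof.
move=> killedS killed_g span_g a; have [m] := ubnP (n - a).
elim: m a => [|m IH] a lt_na y Sy free_y; first by rewrite ltn0 in lt_na.
have [span_y|] := classic (forall v, S v -> span_mod y v).
  by exists a, (leqnn a), y; split=> // j; congr y; apply: val_inj.
move=> /not_all_ex_not [v not_imp]; have [Sv not_span] := imply_to_and _ _ not_imp.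
have free_yv := free_mod_rcons free_y (killedS v Sv) not_span.
have S_yv : forall j, S (rcons_fam y v j).
  by elim/widen_ordP => [|j]; rewrite ?rcons_fam_max ?rcons_fam_widen.
have lt_an : (a < n)%N := free_mod_le_span killed_g (fun j => span_g _ (S_yv j)) free_yv.
have [e [le_a1e [x [Sx free_x ext_x span_x]]]] := IH a.+1 ltac:(lia) _ S_yv free_yv.
exists e, (ltnW le_a1e), x; split=> // j.
by rewrite -(rcons_fam_widen y v j) -ext_x; congr x; apply: val_inj.
Qed.

Lemma free_mod_rank_nullity k (w : 'I_k -> V) : (forall j, killed (w j)) ->
  exists s t, [/\ (s + t)%N = k, exists f : 'I_s -> 'I_k, free_mod (w \o f) &
    exists Rl : 'I_t -> 'I_k -> R,
      (forall l, N (\sum_(j < k) Rl l j *: w j)) /\ vec_indep M Rl].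
Proof.
elim: k w => [|k IH] w killed_w.
  exists 0%N, 0%N; split=> //; first by exists id => c _ [].
  by exists (fun _ _ => 0); split=> [[]|c _ []].
pose w' j := w (widen_ord (leqnSn k) j).
have [s [t [st_k [f free_f] [Rl [N_Rl indep_Rl]]]]] := IH w' (fun j => killed_w _).
pose f' i := widen_ord (leqnSn k) (f i).
have [free_ext|not_free] := classic (free_mod (rcons_fam (w \o f') (w ord_max))).
  exists s.+1, t; split; first by rewrite addSn st_k.
    by exists (rcons_fam f' ord_max); apply: free_mod_eq free_ext => i; rewrite rcons_fam_comp.
  exists (fun l => rcons_fam (Rl l) 0); split; last exact: vec_indep_rcons0.
  move=> l; rewrite big_ord_recr /= rcons_fam_max scale0r addr0.
  by under eq_bigr do rewrite rcons_fam_widen.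
have [a N_a] := span_mod_of_not_free_rcons free_f (killed_w _) not_free.
pose rho := rcons_fam (fun j => - \sum_(l < s) (f l == j)%:R * a l) 1.
exists s, t.+1; split; first by rewrite addnS st_k.
  by exists f'.
exists (rcons_fam (fun l => rcons_fam (Rl l) 0) rho); split; last first.
  exact: vec_indep_rcons (rcons_fam_max _ _) indep_Rl.
elim/widen_ordP => [|l]; rewrite ?rcons_fam_max ?rcons_fam_widen; last first.
  rewrite big_ord_recr /= rcons_fam_max scale0r addr0.
  by under eq_bigr do rewrite rcons_fam_widen.
rewrite big_ord_recr /= /rho rcons_fam_max scale1r addrC.
under eq_bigr do rewrite rcons_fam_widen scaleNr scaler_suml.
rewrite sumrN exchange_big /=.
suff -> : \sum_(l < s) \sum_(j < k) ((f l == j)%:R * a l) *: w' j =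
  \sum_(l < s) a l *: w' (f l) by [].
apply: eq_bigr => l _; rewrite (bigD1 (f l)) //= eqxx mul1r big1 ?addr0 // => j.
by rewrite eq_sym => /negbTE ->; rewrite mul0r scale0r.
Qed.

End ResidueLinearAlgebra.

Section IdealsAsModules.
Variable R : comNzRingType.
Implicit Types (J M N : R -> Prop).

Lemma killed_prod_ideal M (v : R^o) : M v -> killed M (prod_ideal M M : R^o -> Prop) v.
Proof. by move=> Mv c Mc; apply: prod_ideal_mul. Qed.

Lemma generated_span J N n (g : 'I_n -> R) :
  (forall x, J x <-> exists c : 'I_n -> R, x = \sum_(i < n) c i * g i) ->
  forall v, sum_ideal J N v -> span_mod (N : R^o -> Prop) (g : 'I_n -> R^o) v.
Proof.
by move=> genJ _ [a [b [/genJ [c ->] [Nb ->]]]]; exists c; rewrite addrC addKr.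
Qed.

Definition coord_in M {e} (v : 'rV[R]_e) : Prop := forall i, M (v 0 i).

Lemma coord_in_submod M e : is_ideal M -> is_submod (@coord_in M e).
Proof.
move=> iM; split; first by move=> i; rewrite mxE; case: iM.
by split=> [u v Mu Mv | a v Mv] i; rewrite mxE; [apply: idealD | apply: idealM].
Qed.

Lemma vec_indep_rowsE M e k (Vf : 'I_k -> 'I_e -> R) :
  vec_indep M Vf <-> free_mod M (@coord_in M e) (fun j => \row_i Vf j i).
Proof.
have coordE c i : (\sum_(j < k) c j *: \row_i Vf j i) 0 i = \sum_(j < k) c j * Vf j i.
  by rewrite summxE; apply: eq_bigr => j _; rewrite !mxE.
by split=> indep_V c Mc i; apply: indep_V => {}i; move: (Mc i); rewrite coordE.
Qed.

Lemma free_rows_le M e k (W : 'I_k -> 'rV[R]_e) :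
  maximal_ideal_p M -> free_mod M (@coord_in M e) W -> (k <= e)%N.
Proof.
move=> M_max; have M_ideal := M_max.1.1.
apply: (free_mod_le_span (coord_in_submod _ M_ideal) M_max (u := fun i => 'e_i)).
  by move=> i c Mc j; rewrite !mxE mulrC; apply: idealM M_ideal Mc.
move=> j; exists (fun i => W j 0 i); rewrite -row_sum_delta subrr.
exact: submod0 (coord_in_submod _ M_ideal).
Qed.

End IdealsAsModules.

Section CotangentSpaces.
Variables (A B : comNzRingType) (mA : A -> Prop) (mB : B -> Prop).
Variables (phi : {rmorphism A -> B}) (I : A -> Prop).
Hypotheses (noethA : noetherian A) (mA_max : maximal_ideal_p mA) (mB_max : maximal_ideal_p mB).
Hypotheses (phi_local : forall a, mA a -> mB (phi a)).
Hypotheses (I_ideal : is_ideal I) (I_sub : forall x, I x -> mA x).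

Local Notation m2A := (prod_ideal mA mA : A^o -> Prop).
Local Notation m2B := (prod_ideal mB mB : B^o -> Prop).
Local Notation SA := (sum_ideal I (prod_ideal mA mA)).
Local Notation SB := (sum_ideal (ext_ideal phi I) (prod_ideal mB mB)).

Let mA_ideal : is_ideal mA := mA_max.1.1.
Let mB_ideal : is_ideal mB := mB_max.1.1.
Let m2A_submod : is_submod m2A := prod_ideal_is_ideal _ mA_ideal.
Let m2B_submod : is_submod m2B := prod_ideal_is_ideal _ mB_ideal.

Lemma SA_sub v : SA v -> mA v.
Proof. by move=> [a [b [Ia [m2b ->]]]]; apply: idealD (I_sub Ia) (prod_ideal_subr _ m2b). Qed.

Lemma phi_m2 b : prod_ideal mA mA b -> prod_ideal mB mB (phi b).
Proof.
move=> [n [a [c [mac ->]]]]; exists n, (phi \o a), (phi \o c); split.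
  by move=> i; have [ma mc] := mac i; split; apply: phi_local.
by rewrite rmorph_sum; apply: eq_bigr => i _; rewrite rmorphM.
Qed.

Lemma phi_SA v : SA v -> SB (phi v).
Proof.
move=> [a [b [Ia [m2b ->]]]]; exists (phi a), (phi b); split; last split.
- by exists 1%N, (fun _ => a), (fun _ => 1); rewrite big_ord1 mulr1.
- exact: phi_m2.
- by rewrite rmorphD.
Qed.

Lemma delta_exists : exists dA, delta_is mA I dA.
Proof.
have [n [g genI]] := noethA I_ideal.
apply: (@dim_mod_exists _ A^o mA m2A SA n) => k w Sw free_w.
apply: (free_mod_le_span m2A_submod mA_max _ _ free_w) => [i | j].
  exact/killed_prod_ideal/I_sub/(generators_mem genI).
exact: generated_span genI _ (Sw j).
Qed.

Lemma cotangent_basis_extend dA (y : 'I_dA -> A) :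
  (forall j, SA (y j)) -> indep_mod mA (prod_ideal mA mA) y ->
  exists e (le_de : (dA <= e)%N) (x : 'I_e -> A),
    cotangent_basis mA x /\ forall j, x (widen_ord le_de j) = y j.
Proof.
move=> Sy free_y; have [n [g genm]] := noethA mA_ideal.
have killed_g i : killed mA m2A (g i).
  exact/killed_prod_ideal/(generators_mem genm).
have span_g v : mA v -> span_mod m2A (g : 'I_n -> A^o) v.
  move=> mv; apply: generated_span genm _ _.
  by exists v, 0; split; [|split; [case: m2A_submod | rewrite addr0]].
have [e [le_de [x [mx free_x ext_x span_x]]]] :=
  @free_mod_extend _ A^o mA m2A m2A_submod mA_max mA n g (@killed_prod_ideal _ mA)
    killed_g span_g dA y (fun j => SA_sub (Sy j)) free_y.
by exists e, le_de, x.
Qed.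

Section ExtendedIdeal.
Variables (dA : nat) (y : 'I_dA -> A).
Hypotheses (Sy : forall j, SA (y j)) (free_y : indep_mod mA (prod_ideal mA mA) y).
Hypothesis max_y : forall w : 'I_dA.+1 -> A, (forall j, SA (w j)) -> ~ indep_mod mA (prod_ideal mA mA) w.

Lemma ext_ideal_span v : SB v -> span_mod m2B (fun j => phi (y j) : B^o) v.
Proof.
move=> [_ [q [[n [a [b [Ia ->]]] [m2q ->]]]]].
apply: span_modD => //; last exact: span_mod_submod.
apply: span_mod_sum => // i; rewrite mulrC; apply: span_modZ => //.
have SAa : SA (a i) by exists (a i), 0; split; [|split; [case: m2A_submod | rewrite addr0]].
have not_free : ~ indep_mod mA (prod_ideal mA mA) (rcons_fam y (a i)).
  apply: max_y; elim/widen_ordP => [|j]; rewrite ?rcons_fam_max ?rcons_fam_widen //.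
have [c m2c] := @span_mod_of_not_free_rcons _ A^o mA m2A m2A_submod mA_max _ _ _ free_y
  (killed_prod_ideal (SA_sub SAa)) not_free.
exists (phi \o c); have := phi_m2 m2c.
by rewrite rmorphB rmorph_sum; under eq_bigr do rewrite rmorphM.
Qed.

Lemma SB_free_le k (w : 'I_k -> B^o) :
  (forall j, SB (w j)) -> free_mod mB m2B w -> (k <= dA)%N.
Proof.
move=> Sw; apply: (free_mod_le_span m2B_submod mB_max _ (fun j => ext_ideal_span (Sw j))).
by move=> j; apply/killed_prod_ideal/phi_local/SA_sub.
Qed.

Lemma delta_phi_exists_le : exists dB, delta_phi_is phi mB I dB /\ (dB <= dA)%N.
Proof.
have [dB delB] := @dim_mod_exists _ B^o mB m2B SB dA SB_free_le.
by exists dB; split=> //; have [[w [Sw /(SB_free_le Sw)]]] := delB.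
Qed.

End ExtendedIdeal.

Section Kernel.
Variables (e : nat) (x : 'I_e -> A).

Definition rd_kernel_row (v : 'rV[B]_e) : Prop := in_rd_kernel phi mB x (fun i => v 0 i).

Lemma rd_kernel_rowE (f : 'I_e -> B) : rd_kernel_row (\row_i f i) <-> in_rd_kernel phi mB x f.
Proof. by rewrite /rd_kernel_row /in_rd_kernel; under eq_bigr do rewrite mxE. Qed.

Lemma rd_kernel_dim_exists : exists r, dim_mod mB (@coord_in _ mB e) rd_kernel_row r.
Proof. by apply: (dim_mod_exists (n := e)) => k W _; apply: free_rows_le mB_max. Qed.

Lemma rd_of_kernel_dim r : cotangent_basis mA x ->
  dim_mod mB (@coord_in _ mB e) rd_kernel_row r -> rd_is phi mA mB r.
Proof.
have rowK (W : 'rV[B]_e) : \row_i W 0 i = W by apply/rowP => i; rewrite mxE.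
move=> cotx [[W [KW free_W]] max_r]; exists e, x; split=> //; split.
  exists (fun j i => W j 0 i); split=> [j|]; first exact: KW.
  by apply/vec_indep_rowsE; apply: free_mod_eq free_W => j; rewrite rowK.
by move=> Vf KV /vec_indep_rowsE; apply: max_r => j; apply/rd_kernel_rowE.
Qed.

Lemma relations_le_kernel_dim dA (le_de : (dA <= e)%N) (y : 'I_dA -> A) t
    (Rl : 'I_t -> 'I_dA -> B) r :
  (forall j, x (widen_ord le_de j) = y j) ->
  (forall l, prod_ideal mB mB (\sum_(j < dA) Rl l j * phi (y j))) -> vec_indep mB Rl ->
  dim_mod mB (@coord_in _ mB e) rd_kernel_row r -> (t <= r)%N.
Proof.
move=> ext_x m2_Rl indep_Rl kr.
pose pad (v : 'I_dA -> B) (i : 'I_e) := if insub (val i) is Some j then v j else 0.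
have padE v j : pad v (widen_ord le_de j) = v j by rewrite /pad /= valK.
apply: (dim_mod_le kr (w := fun l => \row_i pad (Rl l) i)) => [l|].
  apply/rd_kernel_rowE; rewrite /in_rd_kernel (bigID (fun i : 'I_e => (i < dA)%N)) /=.
  rewrite [X in _ + X]big1 => [|i /negbTE not_lt]; last by rewrite /pad insubF // mulr0.
  rewrite addr0 (big_ord_narrow le_de).
  by under eq_bigr do rewrite padE ext_x mulrC; apply: m2_Rl.
apply/vec_indep_rowsE => c Mc; apply: indep_Rl => j.
by have := Mc (widen_ord le_de j); under eq_bigr do rewrite padE.
Qed.

End Kernel.

End CotangentSpaces.

Theorem lemma2p4 (A B : comNzRingType) (mA : A -> Prop) (mB : B -> Prop)
  (phi : {rmorphism A -> B}) (I : A -> Prop)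
  (noethA : noetherian A) (noethB : noetherian B)
  (locA : local_ring mA) (locB : local_ring mB)
  (hloc : forall a, mA a -> mB (phi a))
  (hI : proper_ideal_p I) :
  exists dA dB r : nat,
    delta_is mA I dA /\ delta_phi_is phi mB I dB /\ rd_is phi mA mB r /\
    (dB <= dA)%N /\ (dA <= dB + r)%N.
Proof.
have [[mA_max _] [mB_max _]] := (locA, locB).
have I_sub x : I x -> mA x.
  have [M [M_max IM]] := proper_ideal_sub_maximal noethA hI.
  by move=> /IM /(locA.2 M M_max x).
have [dA delA] := delta_exists noethA mA_max hI.1 I_sub.
have [[y [Sy free_y]] max_y] := delA.
have [e [le_de [x [cotx ext_x]]]] := cotangent_basis_extend noethA mA_max I_sub Sy free_y.
have [dB [delB le_BA]] := delta_phi_exists_le mA_max mB_max hloc I_sub Sy free_y max_y.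
have [s [t [st_dA [f free_f] [Rl [m2_Rl indep_Rl]]]]] :=
  free_mod_rank_nullity (ideal_submod (prod_ideal_is_ideal mB mB_max.1.1)) mB_max
    (w := fun j => phi (y j) : B^o)
    (fun j => killed_prod_ideal (hloc _ (SA_sub mA_max I_sub (Sy j)))).
have le_sB : (s <= dB)%N := @dim_mod_le _ B^o mB _ _ _ _ _ delB (fun i => phi_SA hloc (Sy (f i))) free_f.
have [r kr] := rd_kernel_dim_exists phi mB_max x.
have le_tr := relations_le_kernel_dim ext_x m2_Rl indep_Rl kr.
exists dA, dB, r; do !split => //; first exact: rd_of_kernel_dim cotx kr.
lia.
Qed.
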